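(* There exist positive constants $\varepsilon_1,\varepsilon_2,\varepsilon_3$ with the following property. For every $t\le 0$ (so that $p_2(t)\le p_1(t)\le 0$), every $i,j\in\mathbb Z$ and every $z\in\mathbb R$, write $\Phi=(\phi_{i,j;1}(z-p_1(t)),\phi_{i,j;2}(z+p_1(t)),\phi_{i,j;3}(z+p_2(t)))$. Then: - $Q_y(\Phi)\ge\varepsilon_1$ whenever $z\le -p_1(t)$; - $Q_z(\Phi)\ge\varepsilon_2$ whenever $p_1(t)\le z\le -p_2(t)$; - $Q_w(\Phi)\ge\varepsilon_3$ whenever $z\ge -p_1(t)$.
   Context: Setting: $0<a<1$, and $J$, $f_{i,j}$ satisfy the following. - $J:\mathbb Z^2\to[0,\infty)$ is even, $\sum J=1$, and $J$ is finitely supported. - $f_{i,j}\in C^2$ is bistable: $f_{i,j}(0)=f_{i,j}(a)=f_{i,j}(1)=0$, $f'_{i,j}(0),f'_{i,j}(1)<0<f'_{i,j}(a)$, $f_{i,j}<0$ on $(0,a)$ and $f_{i,j}>0$ on $(a,1)$. - $f_{i,j}$ is periodic with periods $N_1$ in $i$ and $N_2$ in $j$. - For all $i,j$: $f_{i,j}(u)\ge f_{i,j}'(a)(u-a)$ on $[0,a]$ and $f_{i,j}(u)\le f_{i,j}'(a)(u-a)$ on $[a,1]$. Fix $\theta$. For $k=1,2,3$, let $\phi_{i,j;k}$ (periodic in $i,j$ with periods $N_1,N_2$) be monotone pulsating traveling front profiles with speeds $c_k$. They solve $$c_k\phi_{i,j;k}'(\xi)=\sum_{k_1,k_2}J(k_1,k_2)\phi_{i-k_1,j-k_2;k}(\xi-k_1\cos\theta-k_2\sin\theta)-\phi_{i,j;k}(\xi)+f_{i,j}(\phi_{i,j;k}(\xi)),$$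 with the following limits and normalizations: - $\phi_{i,j;1}(-\infty)=1$, $\phi_{i,j;1}(+\infty)=0$, $\phi_{i,j;1}(0)=a/2$; - $\phi_{i,j;2}(-\infty)=0$, $\phi_{i,j;2}(+\infty)=a$, $\phi_{i,j;2}(0)=a/2$; - $\phi_{i,j;3}(-\infty)=a$, $\phi_{i,j;3}(+\infty)=1$, $\phi_{i,j;3}(0)=(1+a)/2$. The speeds satisfy $c_1<c_2<c_3$. Define $Q$ on $D_1=([0,1]\times[0,a]\times[a,1])\setminus(\{(1,a,w)\}\cup\{(1,z,1)\}\cup\{(y,0,1)\})$ by $$Q(y,z,w)=z+(1-z)\frac{(1-y)z(w-a)+y(a-z)(1-w)}{(1-y)z(1-a)+(a-z)(1-w)}.$$ Let $s_1=(c_2-c_1)/2$, $\bar c=(c_1+c_2)/2$ and $s_2=c_3-\bar c$. For positive constants $\kappa,L,p_0$ define, for $t\le0$, $$p_1(t)=s_1t-\tfrac1\kappa\ln\big[e^{-\kappa p_0}+\tfrac{L(1-e^{\kappa s_1t})}{s_1}\big],\qquad p_2(t)=s_2t-\tfrac1\kappa\ln\big[e^{-\kappa p_0}+\tfrac{L(1-e^{\kappa s_1t})}{s_1}\big].$$ These are the solutions of $p_1'=s_1+Le^{\kappa p_1}$ and $p_2'=s_2+Le^{\kappa p_1}$ with $p_1(0)=p_2(0)=p_0$. Here $p_0$ is chosen so that $p_1,p_2\le 0$ for $t\le 0$. $Q_y,Q_z,Q_w$ denote the partial derivatives of $Q$. *)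

From Stdlib Require Import Reals Lra List ZArith.
Open Scope R_scope.

Definition sumZ2 (S : list (Z * Z)) (g : Z * Z -> R) : R :=
  fold_right (fun k acc => g k + acc) 0 S.

Definition kernel_hyp (J : Z -> Z -> R) (S : list (Z * Z)) : Prop :=
  NoDup S /\
  (forall k1 k2, 0 <= J k1 k2) /\
  (forall k1 k2, J (- k1)%Z (- k2)%Z = J k1 k2) /\
  (forall k1 k2, ~ In (k1, k2) S -> J k1 k2 = 0) /\
  sumZ2 S (fun k => J (fst k) (snd k)) = 1.

Definition nonlin_hyp (a : R) (N1 N2 : Z) (f f1 f2 : Z -> Z -> R -> R) : Prop :=
  (forall i j u, derivable_pt_lim (f i j) u (f1 i j u)) /\
  (forall i j u, derivable_pt_lim (f1 i j) u (f2 i j u)) /\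
  (forall i j, continuity (f2 i j)) /\
  (forall i j, f i j 0 = 0 /\ f i j a = 0 /\ f i j 1 = 0) /\
  (forall i j, f1 i j 0 < 0 /\ f1 i j 1 < 0 /\ 0 < f1 i j a) /\
  (forall i j u, 0 < u < a -> f i j u < 0) /\
  (forall i j u, a < u < 1 -> f i j u > 0) /\
  (forall i j, f (i + N1)%Z j = f i j /\ f i (j + N2)%Z = f i j) /\
  (forall i j u, 0 <= u <= a -> f i j u >= f1 i j a * (u - a)) /\
  (forall i j u, a <= u <= 1 -> f i j u <= f1 i j a * (u - a)).

Definition lim_pinf (g : R -> R) (l : R) : Prop :=
  forall eps, 0 < eps -> exists M, forall x, M <= x -> Rabs (g x - l) < eps.
Definition lim_minf (g : R -> R) (l : R) : Prop :=
  forall eps, 0 < eps -> exists M, forall x, x <= M -> Rabs (g x - l) < eps.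

Definition nonincreasing (g : R -> R) : Prop := forall x y, x <= y -> g y <= g x.
Definition nondecreasing (g : R -> R) : Prop := forall x y, x <= y -> g x <= g y.

Definition front_eq (J : Z -> Z -> R) (S : list (Z * Z)) (f : Z -> Z -> R -> R)
  (N1 N2 : Z) (theta c : R) (phi : Z -> Z -> R -> R) : Prop :=
  (forall i j, phi (i + N1)%Z j = phi i j /\ phi i (j + N2)%Z = phi i j) /\
  exists dphi : Z -> Z -> R -> R,
    forall i j xi,
      derivable_pt_lim (phi i j) xi (dphi i j xi) /\
      c * dphi i j xi =
        sumZ2 S (fun k => J (fst k) (snd k) *
                  phi (i - fst k)%Z (j - snd k)%Z
                      (xi - IZR (fst k) * cos theta - IZR (snd k) * sin theta))
        - phi i j xi + f i j (phi i j xi).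

Definition Q (a y z w : R) : R :=
  z + (1 - z) * (((1 - y) * z * (w - a) + y * (a - z) * (1 - w)) /
                 ((1 - y) * z * (1 - a) + (a - z) * (1 - w))).

Definition pfun (kappa L p0 s1 s : R) (t : R) : R :=
  s * t - / kappa * ln (exp (- kappa * p0) + L * (1 - exp (kappa * s1 * t)) / s1).

(* Q is a rational function whose partial derivatives have the
   closed forms Q_y = a(1-z)(1-w)^2(a-z)/D^2, Q_z = a(1-y)(1-w)(1-a)(w-y)/D^2
   and Q_w = a(1-z)(1-y)^2 z(1-a)/D^2, where D is the denominator of the
   fraction in Q.  On the box [0,1]x[0,a]x[a,1] one has D <= 1, so each partial
   derivative is bounded below by its numerator as soon as D > 0.  The
   numerators are products of factors which stay uniformly away from 0 on
   suitable sub-boxes, giving explicit constants eps_y, eps_z, eps_w.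
   For the theorem it remains to locate the three front profiles: monotone
   profiles stay between their limits at -oo and +oo, and the normalizations
   phi(0) = a/2 resp. (1+a)/2 together with p2 <= p1 <= 0 place the triple
   (Y,Z,W) in the sub-box required by each of the three regimes. *)

From Stdlib Require Import Reals ZArith List Lra.
From Coquelicot Require Import Coquelicot.
Open Scope R_scope.

Definition Qden (a y z w : R) : R := (1 - y) * z * (1 - a) + (a - z) * (1 - w).

Lemma Q_derive_y a y z w : Qden a y z w <> 0 ->
  derivable_pt_lim (fun y => Q a y z w) y
    (a * (1 - z) * ((1 - w) * (1 - w)) * (a - z) / Qden a y z w ^ 2).
Proof.
  unfold Qden; intro HD; apply is_derive_Reals; unfold Q.
  auto_derive; [exact HD | field; exact HD].
Qed.

Lemma Q_derive_z a y z w : Qden a y z w <> 0 ->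
  derivable_pt_lim (fun z => Q a y z w) z
    (a * (1 - y) * (1 - w) * (1 - a) * (w - y) / Qden a y z w ^ 2).
Proof.
  unfold Qden; intro HD; apply is_derive_Reals; unfold Q.
  auto_derive; [exact HD | field; exact HD].
Qed.

Lemma Q_derive_w a y z w : Qden a y z w <> 0 ->
  derivable_pt_lim (fun w => Q a y z w) w
    (a * (1 - z) * ((1 - y) * (1 - y)) * z * (1 - a) / Qden a y z w ^ 2).
Proof.
  unfold Qden; intro HD; apply is_derive_Reals; unfold Q.
  auto_derive; [exact HD | field; exact HD].
Qed.

Lemma Qden_le_1 a y z w :
  a < 1 -> 0 <= y <= 1 -> 0 <= z <= a -> a <= w <= 1 -> Qden a y z w <= 1.
Proof.
  intros Ha Hy Hz Hw; unfold Qden.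
  assert (Hya : 0 <= (1 - y) * (1 - a) <= 1) by (split; nra).
  replace ((1 - y) * z * (1 - a)) with (z * ((1 - y) * (1 - a))) by ring.
  assert (z * ((1 - y) * (1 - a)) <= z * 1) by (apply Rmult_le_compat_l; lra).
  assert ((a - z) * (1 - w) <= (a - z) * 1) by (apply Rmult_le_compat_l; lra).
  lra.
Qed.

Lemma le_div_sq (n D e : R) : 0 <= e <= n -> 0 < D <= 1 -> e <= n / D ^ 2.
Proof.
  intros [He Hn] [HD HD1].
  assert (HD2 : 0 < D ^ 2) by (apply pow_lt; lra).
  assert (HD21 : D ^ 2 <= 1) by nra.
  apply Rle_trans with n; [lra |].
  apply Rmult_le_reg_r with (D ^ 2); [lra |].
  unfold Rdiv; rewrite Rmult_assoc, Rinv_l by lra; nra.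
Qed.

Lemma mult_le_compat_nonneg x x' u u' :
  0 <= x <= x' -> 0 <= u <= u' -> 0 <= x * u <= x' * u'.
Proof. intros; split; [nra | apply Rmult_le_compat; lra]. Qed.

Ltac bound_product := first [lra | apply mult_le_compat_nonneg; bound_product].

Definition eps_y (a : R) : R := a * (1 - a) * ((1 - a) / 2 * ((1 - a) / 2)) * (a / 2).
Definition eps_z (a : R) : R := a * (1 / 2) * ((1 - a) / 2) * (1 - a) * (a / 2).
Definition eps_w (a : R) : R := a * (1 - a) * (1 / 2 * (1 / 2)) * (a / 2) * (1 - a).

Lemma eps_pos a : 0 < a < 1 -> 0 < eps_y a /\ 0 < eps_z a /\ 0 < eps_w a.
Proof.
  intro Ha; unfold eps_y, eps_z, eps_w.
  repeat split; repeat apply Rmult_lt_0_compat; lra.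
Qed.

(* Q_y >= eps_y when z <= a/2 and w <= (1+a)/2 (here the term (a-z)(1-w)
   keeps D positive). *)
Lemma Q_derive_y_lower a y z w : 0 < a < 1 ->
  0 <= y <= 1 -> 0 <= z <= a / 2 -> a <= w <= (1 + a) / 2 ->
  exists d, derivable_pt_lim (fun y => Q a y z w) y d /\ eps_y a <= d.
Proof.
  intros Ha Hy Hz Hw.
  assert (HD : 0 < Qden a y z w <= 1).
  { split; [| apply Qden_le_1; lra]; unfold Qden.
    assert (0 <= (1 - y) * z * (1 - a))
      by (repeat apply Rmult_le_pos; lra).
    assert (0 < (a - z) * (1 - w)) by (apply Rmult_lt_0_compat; lra); lra. }
  eexists; split; [apply Q_derive_y; lra |].
  apply le_div_sq; [unfold eps_y; bound_product | exact HD].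
Qed.

(* Q_z >= eps_z when y <= a/2 and w <= (1+a)/2: both terms of D are then
   at least (1-a)/2 times z resp. a-z. *)
Lemma Q_derive_z_lower a y z w : 0 < a < 1 ->
  0 <= y <= a / 2 -> 0 <= z <= a -> a <= w <= (1 + a) / 2 ->
  exists d, derivable_pt_lim (fun z => Q a y z w) z d /\ eps_z a <= d.
Proof.
  intros Ha Hy Hz Hw.
  assert (HD : 0 < Qden a y z w <= 1).
  { split; [| apply Qden_le_1; lra]; unfold Qden.
    assert (Hya : (1 - a) / 2 <= (1 - y) * (1 - a)) by nra.
    replace ((1 - y) * z * (1 - a)) with (z * ((1 - y) * (1 - a))) by ring.
    assert (z * ((1 - a) / 2) <= z * ((1 - y) * (1 - a)))
      by (apply Rmult_le_compat_l; lra).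
    assert ((a - z) * ((1 - a) / 2) <= (a - z) * (1 - w))
      by (apply Rmult_le_compat_l; lra).
    nra. }
  eexists; split; [apply Q_derive_z; lra |].
  apply le_div_sq; [unfold eps_z; bound_product | exact HD].
Qed.

(* Q_w >= eps_w when y <= a/2 and z >= a/2 (here the term (1-y)z(1-a)
   keeps D positive). *)
Lemma Q_derive_w_lower a y z w : 0 < a < 1 ->
  0 <= y <= a / 2 -> a / 2 <= z <= a -> a <= w <= 1 ->
  exists d, derivable_pt_lim (fun w => Q a y z w) w d /\ eps_w a <= d.
Proof.
  intros Ha Hy Hz Hw.
  assert (HD : 0 < Qden a y z w <= 1).
  { split; [| apply Qden_le_1; lra]; unfold Qden.
    assert (0 < (1 - y) * z * (1 - a))
      by (repeat apply Rmult_lt_0_compat; lra).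
    assert (0 <= (a - z) * (1 - w)) by (apply Rmult_le_pos; lra); lra. }
  eexists; split; [apply Q_derive_w; lra |].
  apply le_div_sq; [unfold eps_w; bound_product | exact HD].
Qed.

Lemma nonincreasing_range g lo hi :
  nonincreasing g -> lim_minf g hi -> lim_pinf g lo -> forall x, lo <= g x <= hi.
Proof.
  intros Hm Hhi Hlo x; split.
  - destruct (Rle_or_lt lo (g x)) as [Hle | Hlt]; [exact Hle |].
    destruct (Hlo (lo - g x)) as [M HM]; [lra |].
    specialize (HM (Rmax M x) (Rmax_l _ _)); specialize (Hm _ _ (Rmax_r M x)).
    apply Rabs_lt_between' in HM; lra.
  - destruct (Rle_or_lt (g x) hi) as [Hle | Hlt]; [exact Hle |].
    destruct (Hhi (g x - hi)) as [M HM]; [lra |].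
    specialize (HM (Rmin M x) (Rmin_l _ _)); specialize (Hm _ _ (Rmin_r M x)).
    apply Rabs_lt_between' in HM; lra.
Qed.

Lemma nondecreasing_range g lo hi :
  nondecreasing g -> lim_minf g lo -> lim_pinf g hi -> forall x, lo <= g x <= hi.
Proof.
  intros Hm Hlo Hhi x.
  assert (Hneg : forall y, - hi <= - g y <= - lo).
  { apply nonincreasing_range.
    - intros u v Huv; specialize (Hm _ _ Huv); lra.
    - intros e He; destruct (Hlo e He) as [M HM]; exists M; intros y Hy.
      specialize (HM y Hy); rewrite <- Rabs_Ropp.
      replace (- (- g y - - lo)) with (g y - lo) by ring; exact HM.
    - intros e He; destruct (Hhi e He) as [M HM]; exists M; intros y Hy.
      specialize (HM y Hy); rewrite <- Rabs_Ropp.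
      replace (- (- g y - - hi)) with (g y - hi) by ring; exact HM. }
  specialize (Hneg x); lra.
Qed.

Lemma pfun_speed_antimono kappa L p0 s1 s s' t :
  s <= s' -> t <= 0 -> pfun kappa L p0 s1 s' t <= pfun kappa L p0 s1 s t.
Proof. intros Hs Ht; unfold pfun; nra. Qed.

Theorem lemma2p3
  (a : R) (J : Z -> Z -> R) (S : list (Z * Z)) (N1 N2 : Z)
  (f f1 f2 : Z -> Z -> R -> R) (theta c1 c2 c3 : R)
  (phi1 phi2 phi3 : Z -> Z -> R -> R) (kappa L p0 : R) :
  0 < a < 1 ->
  kernel_hyp J S ->
  (0 < N1)%Z -> (0 < N2)%Z ->
  nonlin_hyp a N1 N2 f f1 f2 ->
  front_eq J S f N1 N2 theta c1 phi1 ->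
  front_eq J S f N1 N2 theta c2 phi2 ->
  front_eq J S f N1 N2 theta c3 phi3 ->
  (forall i j, nonincreasing (phi1 i j) /\ lim_minf (phi1 i j) 1 /\
               lim_pinf (phi1 i j) 0 /\ phi1 i j 0 = a / 2) ->
  (forall i j, nondecreasing (phi2 i j) /\ lim_minf (phi2 i j) 0 /\
               lim_pinf (phi2 i j) a /\ phi2 i j 0 = a / 2) ->
  (forall i j, nondecreasing (phi3 i j) /\ lim_minf (phi3 i j) a /\
               lim_pinf (phi3 i j) 1 /\ phi3 i j 0 = (1 + a) / 2) ->
  c1 < c2 < c3 ->
  0 < kappa -> 0 < L ->
  let s1 := (c2 - c1) / 2 in
  let cbar := (c1 + c2) / 2 in
  let s2 := c3 - cbar in
  let p1 := pfun kappa L p0 s1 s1 in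
  let p2 := pfun kappa L p0 s1 s2 in
  (forall t, t <= 0 -> p1 t <= 0 /\ p2 t <= 0) ->
  exists eps1 eps2 eps3 : R, 0 < eps1 /\ 0 < eps2 /\ 0 < eps3 /\
    forall (t : R) (i j : Z) (z : R), t <= 0 ->
      let Y := phi1 i j (z - p1 t) in
      let Z' := phi2 i j (z + p1 t) in
      let W := phi3 i j (z + p2 t) in
      (z <= - p1 t ->
         exists d, derivable_pt_lim (fun y => Q a y Z' W) Y d /\ eps1 <= d) /\
      (p1 t <= z <= - p2 t ->
         exists d, derivable_pt_lim (fun zz => Q a Y zz W) Z' d /\ eps2 <= d) /\
      (- p1 t <= z ->
         exists d, derivable_pt_lim (fun w => Q a Y Z' w) W d /\ eps3 <= d).
Proof.
  intros Ha _ _ _ _ _ _ _ H1 H2 H3 Hc _ _ s1 cbar s2 p1 p2 Hp.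
  exists (eps_y a), (eps_z a), (eps_w a).
  destruct (eps_pos a Ha) as (Hey & Hez & Hew).
  do 3 (split; [assumption |]).
  intros t i j z Ht Y Z' W.
  destruct (Hp t Ht) as [Hp1 Hp2].
  assert (Hp21 : p2 t <= p1 t)
    by (apply pfun_speed_antimono; [unfold s1, s2, cbar; lra | exact Ht]).
  destruct (H1 i j) as (m1 & l1 & r1 & e1).
  destruct (H2 i j) as (m2 & l2 & r2 & e2).
  destruct (H3 i j) as (m3 & l3 & r3 & e3).
  assert (HY : 0 <= Y <= 1) by exact (nonincreasing_range _ _ _ m1 l1 r1 _).
  assert (HZ : 0 <= Z' <= a) by exact (nondecreasing_range _ _ _ m2 l2 r2 _).
  assert (HW : a <= W <= 1) by exact (nondecreasing_range _ _ _ m3 l3 r3 _).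
  split; [| split]; intro Hz.
  - assert (Z' <= a / 2) by (rewrite <- e2; apply m2; lra).
    assert (W <= (1 + a) / 2) by (rewrite <- e3; apply m3; lra).
    apply Q_derive_y_lower; lra.
  - assert (Y <= a / 2) by (rewrite <- e1; apply m1; lra).
    assert (W <= (1 + a) / 2) by (rewrite <- e3; apply m3; lra).
    apply Q_derive_z_lower; lra.
  - assert (Y <= a / 2) by (rewrite <- e1; apply m1; lra).
    assert (a / 2 <= Z') by (rewrite <- e2; apply m2; lra).
    apply Q_derive_w_lower; lra.
Qed.
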